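(* Let $\nu>0$ with $\nu\neq 2$, let $\beta$ be a constant, $K$ a smooth positive function, $C(u)=\beta K(u)$, and $J(u)=\int K(u)\,du$ an antiderivative of $K$. Then the equation $C(u)u_t=z^{-\nu}\left(K(u)z^{\nu}u_z\right)_z$ ($z>0$) admits the Lie point symmetry generators $$\widetilde Y_1=tz\partial_z+t^2\partial_t-\left(\frac{\beta}{4}z^2+\frac{1+\nu}{2}t\right)\frac{J(u)}{K(u)}\partial_u,\quad \widetilde Y_2=\frac{z}{2}\partial_z+t\partial_t,\quad \widetilde Y_3=\partial_t,\quad \widetilde Y_4=-\frac{J(u)}{K(u)}\partial_u .$$
   Context: Here $u=u(z,t)$. A vector field $Y=\xi\partial_z+\tau\partial_t+\eta\partial_u$ (coefficients depending on $z,t,u$) is an admitted Lie point symmetry generator of the equation if its second prolongation annihilates $C(u)u_t-K'(u)u_z^2-K(u)u_{zz}-\frac{\nu}{z}K(u)u_z$ on the solution manifold of the equation (equivalently, the one-parameter local group it generates maps solutions to solutions). *)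

From Stdlib Require Import Reals.
From Coquelicot Require Import Coquelicot.
Open Scope R_scope.

(** Points of the second-order jet space J^2 over (z,t) with dependent
    variable u: coordinates (z, t, u, u_z, u_t, u_zz, u_zt, u_tt). *)
Record jet2 := mkJet2 {
  jz : R; jt : R; ju : R; juz : R; jut : R; juzz : R; juzt : R; jutt : R }.

Definition jfun := jet2 -> R.

Definition set_z (p : jet2) x := mkJet2 x (jt p) (ju p) (juz p) (jut p) (juzz p) (juzt p) (jutt p).
Definition set_t (p : jet2) x := mkJet2 (jz p) x (ju p) (juz p) (jut p) (juzz p) (juzt p) (jutt p).
Definition set_u (p : jet2) x := mkJet2 (jz p) (jt p) x (juz p) (jut p) (juzz p) (juzt p) (jutt p).
Definition set_uz (p : jet2) x := mkJet2 (jz p) (jt p) (ju p) x (jut p) (juzz p) (juzt p) (jutt p).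
Definition set_ut (p : jet2) x := mkJet2 (jz p) (jt p) (ju p) (juz p) x (juzz p) (juzt p) (jutt p).
Definition set_uzz (p : jet2) x := mkJet2 (jz p) (jt p) (ju p) (juz p) (jut p) x (juzt p) (jutt p).
Definition set_uzt (p : jet2) x := mkJet2 (jz p) (jt p) (ju p) (juz p) (jut p) (juzz p) x (jutt p).
Definition set_utt (p : jet2) x := mkJet2 (jz p) (jt p) (ju p) (juz p) (jut p) (juzz p) (juzt p) x.

Definition d_z   (F : jfun) : jfun := fun p => Derive (fun x => F (set_z p x)) (jz p).
Definition d_t   (F : jfun) : jfun := fun p => Derive (fun x => F (set_t p x)) (jt p).
Definition d_u   (F : jfun) : jfun := fun p => Derive (fun x => F (set_u p x)) (ju p).
Definition d_uz  (F : jfun) : jfun := fun p => Derive (fun x => F (set_uz p x)) (juz p).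
Definition d_ut  (F : jfun) : jfun := fun p => Derive (fun x => F (set_ut p x)) (jut p).
Definition d_uzz (F : jfun) : jfun := fun p => Derive (fun x => F (set_uzz p x)) (juzz p).
Definition d_uzt (F : jfun) : jfun := fun p => Derive (fun x => F (set_uzt p x)) (juzt p).
Definition d_utt (F : jfun) : jfun := fun p => Derive (fun x => F (set_utt p x)) (jutt p).

(** Total derivatives D_z, D_t, applied to functions of order <= 1
    (i.e. depending on z, t, u, u_z, u_t only). *)
Definition Dz (F : jfun) : jfun := fun p =>
  d_z F p + juz p * d_u F p + juzz p * d_uz F p + juzt p * d_ut F p.
Definition Dt (F : jfun) : jfun := fun p =>
  d_t F p + jut p * d_u F p + juzt p * d_uz F p + jutt p * d_ut F p.

Record vfield := mkVF {
  vxi : R -> R -> R -> R; vtau : R -> R -> R -> R; veta : R -> R -> R -> R }.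

Definition lift (f : R -> R -> R -> R) : jfun := fun p => f (jz p) (jt p) (ju p).

Section Prolongation.
Variable Y : vfield.
Let xi := lift (vxi Y).
Let tau := lift (vtau Y).
Let eta := lift (veta Y).

Definition eta_z : jfun := fun p => Dz eta p - juz p * Dz xi p - jut p * Dz tau p.
Definition eta_t : jfun := fun p => Dt eta p - juz p * Dt xi p - jut p * Dt tau p.
Definition eta_zz : jfun := fun p => Dz eta_z p - juzz p * Dz xi p - juzt p * Dz tau p.
Definition eta_zt : jfun := fun p => Dt eta_z p - juzz p * Dt xi p - juzt p * Dt tau p.
Definition eta_tt : jfun := fun p => Dt eta_t p - juzt p * Dt xi p - jutt p * Dt tau p.

Definition pr2 (F : jfun) : jfun := fun p =>
  xi p * d_z F p + tau p * d_t F p + eta p * d_u F p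
  + eta_z p * d_uz F p + eta_t p * d_ut F p
  + eta_zz p * d_uzz F p + eta_zt p * d_uzt F p + eta_tt p * d_utt F p.
End Prolongation.

Definition Delta (nu : R) (C K : R -> R) : jfun := fun p =>
  C (ju p) * jut p - Derive K (ju p) * (juz p)^2 - K (ju p) * juzz p
  - nu / jz p * K (ju p) * juz p.

Definition admitted_symmetry (nu : R) (C K : R -> R) (Y : vfield) : Prop :=
  forall p : jet2, 0 < jz p -> Delta nu C K p = 0 -> pr2 Y (Delta nu C K) p = 0.

Definition smooth (f : R -> R) : Prop := forall n x, ex_derive_n f n x.

(* The Kirchhoff substitution w = J(u) turns the equation into the linear
   radial heat equation  beta w_t = w_zz + (nu/z) w_z,  for which the
   projective generator, the scaling, the time translation and w d_w are
   classical symmetries; a d_w-component pulls back through w = J(u) divided by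
   J'(u) = K(u), which gives the generators above.

   We check the whole span directly: for Y = xi d_z + tau d_t + A (J/K) d_u as
   in [symmetry_field], pr2 Y Delta = (A - 2 xi_z) Delta identically.  The
   multiplier is read off the u_zz-terms, Delta being affine in u_zz with
   coefficient -K(u); that these terms close up uses (K (J/K))' = J' = K. *)

From Pilot Require Import Defs.
From Stdlib Require Import Reals Lra FunctionalExtensionality.
From Coquelicot Require Import Coquelicot.
Open Scope R_scope.

Ltac eval_Derive :=
  repeat match goal with |- context [Derive ?f ?x] =>
    let H := fresh in
    eassert (H : is_derive f x _) by
      (auto_derive; [repeat split; auto with derive_hints
                    | autorewrite with derive_hints; reflexivity]);
    rewrite (is_derive_unique f x _ H); clear H
  end.

Section PartialDerivativesOfDelta.
Variables (nu : R) (C C1 K K1 K2 : R -> R).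
Hypothesis C_C1 : forall u, is_derive C u (C1 u).
Hypothesis K_K1 : forall u, is_derive K u (K1 u).
Hypothesis K1_K2 : forall u, is_derive K1 u (K2 u).

Let Derive_C u : Derive C u = C1 u := is_derive_unique _ _ _ (C_C1 u).
Let Derive_K u : Derive K u = K1 u := is_derive_unique _ _ _ (K_K1 u).
Let Derive_K1 u : Derive K1 u = K2 u := is_derive_unique _ _ _ (K1_K2 u).
Let ex_derive_C u : ex_derive C u := ex_intro _ _ (C_C1 u).
Let ex_derive_K u : ex_derive K u := ex_intro _ _ (K_K1 u).
Let ex_derive_K1 u : ex_derive K1 u := ex_intro _ _ (K1_K2 u).
#[local] Hint Resolve ex_derive_C ex_derive_K ex_derive_K1 : derive_hints.
#[local] Hint Rewrite Derive_C Derive_K Derive_K1 : derive_hints.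

Lemma pr2_Delta (Y : vfield) (p : jet2) : jz p <> 0 ->
  pr2 Y (Defs.Delta nu C K) p =
    lift (vxi Y) p * (nu / jz p ^ 2 * K (ju p) * juz p)
  + lift (veta Y) p * (C1 (ju p) * jut p - K2 (ju p) * juz p ^ 2
                       - K1 (ju p) * juzz p - nu / jz p * K1 (ju p) * juz p)
  + eta_z Y p * (- 2 * K1 (ju p) * juz p - nu / jz p * K (ju p))
  + eta_t Y p * C (ju p) - eta_zz Y p * K (ju p).
Proof.
intro z_neq0.
unfold pr2, Defs.Delta, d_z, d_t, d_u, d_uz, d_ut, d_uzz, d_uzt, d_utt,
  set_z, set_t, set_u, set_uz, set_ut, set_uzz, set_uzt, set_utt.
cbn [jz jt ju juz jut juzz juzt jutt].
rewrite (functional_extensionality _ _ Derive_K).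
eval_Derive.
field; assumption.
Qed.

End PartialDerivativesOfDelta.

Section RadialDiffusionSymmetries.
Variables (nu beta : R) (K K1 K2 J : R -> R).
Hypothesis K_K1 : forall u, is_derive K u (K1 u).
Hypothesis K1_K2 : forall u, is_derive K1 u (K2 u).
Hypothesis J_K : forall u, is_derive J u (K u).
Hypothesis K_neq0 : forall u, K u <> 0.
Variables (b0 b1 b2 c0 : R).

(* The coordinates (b0, b1, b2, -c0) refer to the basis (Y3, Y2, Y1, Y4). *)
Definition symmetry_field : vfield :=
  mkVF (fun z t _ => (b1 / 2 + b2 * t) * z) (fun _ t _ => b0 + b1 * t + b2 * t ^ 2)
       (fun z t u => (c0 - beta * b2 / 4 * z ^ 2 - (1 + nu) / 2 * b2 * t) * (J u / K u)).

Let Derive_K u : Derive K u = K1 u := is_derive_unique _ _ _ (K_K1 u).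
Let Derive_K1 u : Derive K1 u = K2 u := is_derive_unique _ _ _ (K1_K2 u).
Let Derive_J u : Derive J u = K u := is_derive_unique _ _ _ (J_K u).
Let ex_derive_K u : ex_derive K u := ex_intro _ _ (K_K1 u).
Let ex_derive_K1 u : ex_derive K1 u := ex_intro _ _ (K1_K2 u).
Let ex_derive_J u : ex_derive J u := ex_intro _ _ (J_K u).
#[local] Hint Resolve ex_derive_K ex_derive_K1 ex_derive_J K_neq0 : derive_hints.
#[local] Hint Rewrite Derive_K Derive_K1 Derive_J : derive_hints.

(* Needed in closed form: [eta_zz] differentiates it once more. *)
Lemma eta_z_symmetry_field : eta_z symmetry_field = fun q =>
  let z := jz q in let t := jt q in let u := ju q in
  - beta * b2 / 2 * z * (J u / K u)
  + juz q * (c0 - beta * b2 / 4 * z ^ 2 - (1 + nu) / 2 * b2 * t)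
          * (1 - J u * K1 u / K u ^ 2)
  - juz q * (b1 / 2 + b2 * t).
Proof.
apply functional_extensionality; intro q.
unfold symmetry_field, eta_z, Dz, d_z, d_u, d_uz, d_ut, lift, set_z, set_u, set_uz, set_ut.
cbn [vxi vtau veta jz jt ju juz jut juzz juzt jutt].
eval_Derive.
field; apply K_neq0.
Qed.

Lemma pr2_Delta_symmetry_field (p : jet2) : jz p <> 0 ->
  pr2 symmetry_field (Defs.Delta nu (fun u => beta * K u) K) p =
    (c0 - beta * b2 / 4 * jz p ^ 2 - (1 + nu) / 2 * b2 * jt p - b1 - 2 * b2 * jt p)
    * Defs.Delta nu (fun u => beta * K u) K p.
Proof.
intro z_neq0.
assert (C_C1 : forall u, is_derive (fun u => beta * K u) u (beta * K1 u))
  by (intro u; apply is_derive_scal, K_K1).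
rewrite (pr2_Delta nu _ _ K K1 K2 C_C1 K_K1 K1_K2 _ _ z_neq0).
unfold eta_zz, eta_t; rewrite eta_z_symmetry_field.
unfold symmetry_field, Defs.Delta, Dz, Dt, d_z, d_t, d_u, d_uz, d_ut, lift,
  set_z, set_t, set_u, set_uz, set_ut.
cbn [vxi vtau veta jz jt ju juz jut juzz juzt jutt].
eval_Derive.
field; auto.
Qed.

Lemma symmetry_field_admitted :
  admitted_symmetry nu (fun u => beta * K u) K symmetry_field.
Proof.
intros p z_pos Delta_p.
rewrite pr2_Delta_symmetry_field, Delta_p by lra.
ring.
Qed.

End RadialDiffusionSymmetries.

Lemma admitted_symmetry_ext nu C K (Y Y' : vfield) :
  admitted_symmetry nu C K Y ->
  (forall z t u, vxi Y' z t u = vxi Y z t u) ->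
  (forall z t u, vtau Y' z t u = vtau Y z t u) ->
  (forall z t u, veta Y' z t u = veta Y z t u) ->
  admitted_symmetry nu C K Y'.
Proof.
intros Y_admitted E_xi E_tau E_eta.
replace Y' with Y; [exact Y_admitted |].
destruct Y, Y'; cbn in *.
f_equal; do 3 (apply functional_extensionality; intro); symmetry; auto.
Qed.

Theorem mainTheorem4 (nu beta : R) (K C J : R -> R) :
  0 < nu -> nu <> 2 ->
  smooth K -> (forall u, 0 < K u) ->
  (forall u, C u = beta * K u) ->
  (forall u, is_derive J u (K u)) ->
  admitted_symmetry nu C K
    (mkVF (fun z t u => t * z) (fun z t u => t ^ 2)
          (fun z t u => - (beta / 4 * z ^ 2 + (1 + nu) / 2 * t) * (J u / K u)))
  /\ admitted_symmetry nu C K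
    (mkVF (fun z t u => z / 2) (fun z t u => t) (fun z t u => 0))
  /\ admitted_symmetry nu C K
    (mkVF (fun z t u => 0) (fun z t u => 1) (fun z t u => 0))
  /\ admitted_symmetry nu C K
    (mkVF (fun z t u => 0) (fun z t u => 0) (fun z t u => - (J u / K u))).
Proof.
intros _ _ K_smooth K_pos C_eq J_K.
replace C with (fun u => beta * K u) by (apply functional_extensionality; auto).
assert (K_neq0 : forall u, K u <> 0) by (intro u; apply Rgt_not_eq, K_pos).
assert (K_K1 : forall u, is_derive K u (Derive K u))
  by (intro u; apply Derive_correct, (K_smooth 1%nat)).
assert (K1_K2 : forall u, is_derive (Derive K) u (Derive (Derive K) u))
  by (intro u; apply Derive_correct, (K_smooth 2%nat)).
pose proof (symmetry_field_admitted nu beta K _ _ J K_K1 K1_K2 J_K K_neq0) as span.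
split; [| split; [| split]];
  [ apply admitted_symmetry_ext with (symmetry_field nu beta K J 0 0 1 0)
  | apply admitted_symmetry_ext with (symmetry_field nu beta K J 0 1 0 0)
  | apply admitted_symmetry_ext with (symmetry_field nu beta K J 1 0 0 0)
  | apply admitted_symmetry_ext with (symmetry_field nu beta K J 0 0 0 (-1)) ];
  first [ apply span
        | intros; unfold symmetry_field; cbn [vxi vtau veta]; field; apply K_neq0 ].
Qed.
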